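(* Let $\Omega=\{1,\dots,n\}$, $u,w\in\mathbb{R}^n_{+}\setminus\{0\}$ and $p>1$. Define $f:2^{\Omega}\to\mathbb{R}$ by $f(\mathcal{S})=\sum_{s\in\mathcal{S}}u_s+\left(\sum_{s\in\mathcal{S}}w_s\right)^p$. Then $D[f]\le p\|w\|_1^{p-1}\|w\|_\infty$.
   Context: $D[f]=\max\{f(\mathcal{A}\cup\mathcal{B}\cup\{s\})-f(\mathcal{A}\cup\mathcal{B})-f(\mathcal{A}\cup\{s\})+f(\mathcal{A}):\mathcal{A},\mathcal{B}\subseteq\Omega,s\in\Omega,|\mathcal{A}|\le|\Omega|-1\}$. *)

From HB Require Import structures.
From mathcomp Require Import all_boot all_order all_algebra.
From mathcomp Require Import reals exp.
Set Implicit Arguments. Unset Strict Implicit. Unset Printing Implicit Defensive.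
Import Order.TTheory GRing.Theory Num.Theory.
Local Open Scope ring_scope.

(* The value at A = B = ∅ (any s) is 0, so when Ω is nonempty the
   maximum is >= 0 and using 0 as the neutral element of the iterated
   max gives exactly the maximum. *)
Definition Dmax (R : realDomainType) (T : finType) (f : {set T} -> R) : R :=
  \big[Num.max/0]_(A : {set T} | (#|A| <= #|T| - 1)%N)
    \big[Num.max/0]_(B : {set T})
      \big[Num.max/0]_(s : T)
        (f (A :|: B :|: [set s]) - f (A :|: B) - f (A :|: [set s]) + f A).

Definition fpow (R : realType) (n : nat) (u w : 'I_n -> R) (p : R)
  (S : {set 'I_n}) : R :=
  \sum_(s in S) u s + powR (\sum_(s in S) w s) p.

Definition norm1 (R : realDomainType) (n : nat) (w : 'I_n -> R) : R :=
  \sum_(i < n) `|w i|.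

Definition norminf (R : realDomainType) (n : nat) (w : 'I_n -> R) : R :=
  \big[Num.max/0]_(i < n) `|w i|.

From HB Require Import structures.
From mathcomp Require Import all_boot all_order all_algebra.
From mathcomp Require Import reals exp ring lra.
Import Order.TTheory GRing.Theory Num.Theory.
Local Open Scope ring_scope.

(* The linear part of f is modular, so its second differences are <= 0.  The
   power part is monotone, so a second difference is at most the increment
   (W + w_s)^p - W^p of x |-> x^p, where W <= ||w||_1 - w_s; by convexity this
   increment lies below the tangent bound p (W + w_s)^(p-1) w_s. *)

Section SecondDifference.
Context {R : realDomainType} {T : finType}.
Implicit Types (f g : {set T} -> R) (A B X Y : {set T}) (s : T).

Definition second_diff f A B s : R :=
  f (A :|: B :|: [set s]) - f (A :|: B) - f (A :|: [set s]) + f A.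

Lemma Dmax_le f (c : R) :
  0 <= c -> (forall A B s, second_diff f A B s <= c) -> Dmax f <= c.
Proof.
move=> c0 le_c; apply: bigmax_le => // A _; apply: bigmax_le => // B _.
by apply: bigmax_le => // s _; apply: le_c.
Qed.

Lemma second_diffD f g A B s :
  second_diff (fun X => f X + g X) A B s =
  second_diff f A B s + second_diff g A B s.
Proof. by rewrite /second_diff; ring. Qed.

Lemma second_diff_le_increment {f} A B s :
  {homo f : X Y / X \subset Y >-> X <= Y} ->
  second_diff f A B s <= f (A :|: B :|: [set s]) - f (A :|: B).
Proof.
move=> f_mono; have := f_mono _ _ (subsetUl A [set s]).
by rewrite /second_diff; lra.
Qed.

Lemma ler_sum_subset {F : T -> R} {X Y} :
  (forall i, 0 <= F i) -> X \subset Y ->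
  \sum_(i in X) F i <= \sum_(i in Y) F i.
Proof.
move=> F0 /setIidPr XY; rewrite [leRHS](big_setID X) /= XY lerDl.
exact: sumr_ge0.
Qed.

Lemma second_diff_sum_le0 (F : T -> R) A B s :
  (forall i, 0 <= F i) -> second_diff (fun X => \sum_(i in X) F i) A B s <= 0.
Proof.
move=> F0; rewrite /second_diff.
have [sAB|sNAB] := boolP (s \in A :|: B).
  have -> : A :|: B :|: [set s] = A :|: B by apply/setUidPl; rewrite sub1set.
  have := ler_sum_subset F0 (subsetUl A [set s]); lra.
have sNA : s \notin A by apply: contra sNAB; rewrite inE => ->.
by rewrite !(setUC _ [set s]) !big_setU1 //=; lra.
Qed.

End SecondDifference.

Lemma powR_sub_le_tangent {R : realType} {x z p : R} :
  0 <= x -> x <= z -> 1 < p ->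
  powR z p - powR x p <= p * powR z (p - 1) * (z - x).
Proof.
move=> x0 xz p1.
have z0 : 0 <= z := le_trans x0 xz.
have p0 : 0 < p := lt_trans ltr01 p1.
have p1_gt0 : 0 < p - 1 by rewrite subr_gt0.
pose q := p / (p - 1).
have q0 : 0 < q by rewrite divr_gt0.
have pq : p^-1 + q^-1 = 1 by rewrite /q invfM invrK; field; rewrite gt_eqF.
(* Young's inequality with exponents p and q, applied to x and z^(p-1). *)
have young := conjugate_powR x0 (powR_ge0 z (p - 1)) p0 q0 pq.
rewrite -powRrM /q mulrCA divff ?gt_eqF // mulr1 in young.
have zp : z * powR z (p - 1) = powR z p by rewrite mulr_powRB1.
have young' : p * (x * powR z (p - 1)) <= powR x p + (p - 1) * powR z p.
  have -> : powR x p + (p - 1) * powR z p =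
            p * (powR x p / p + powR z p / (p / (p - 1))).
    by field; rewrite !gt_eqF.
  by rewrite ler_wpM2l // ltW.
by rewrite mulrBr -zp; rewrite -zp in young'; nra.
Qed.

Section PowerOfSum.
Context {R : realType} {n : nat} {w : 'I_n -> R}.
Hypothesis w0 : forall i, 0 <= w i.

Lemma norm1_ge0 : 0 <= norm1 w.
Proof. exact: sumr_ge0. Qed.

Lemma norminf_ge0 : 0 <= norminf w.
Proof. by rewrite /norminf; elim/big_ind: _ => // x y x0 y0; rewrite le_max x0. Qed.

Lemma powR_norm_bound_ge0 (p : R) :
  0 <= p -> 0 <= p * powR (norm1 w) (p - 1) * norminf w.
Proof. by move=> p0; rewrite !mulr_ge0 ?powR_ge0 ?norminf_ge0. Qed.

Lemma ler_norminf i : `|w i| <= norminf w.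
Proof. exact: le_bigmax. Qed.

Lemma sum_le_norm1 (S : {set 'I_n}) : \sum_(i in S) w i <= norm1 w.
Proof.
rewrite /norm1 [leRHS](eq_bigr w) => [|i _]; last by rewrite ger0_norm.
by rewrite [leRHS](bigID (mem S)) /= lerDl sumr_ge0.
Qed.

Lemma powR_sum_homo (p : R) : 0 <= p ->
  {homo (fun S : {set 'I_n} => powR (\sum_(i in S) w i) p) :
    X Y / X \subset Y >-> X <= Y}.
Proof.
move=> p0 X Y XY; apply: ge0_ler_powR; rewrite ?nnegrE ?sumr_ge0 //.
exact: ler_sum_subset.
Qed.

Lemma powR_sum_increment_le (p : R) (Y : {set 'I_n}) (s : 'I_n) : 1 < p ->
  powR (\sum_(i in Y :|: [set s]) w i) p - powR (\sum_(i in Y) w i) p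
    <= p * powR (norm1 w) (p - 1) * norminf w.
Proof.
move=> p1; have [sY|sNY] := boolP (s \in Y).
  by rewrite (setUidPl _) ?sub1set // subrr powR_norm_bound_ge0 //; lra.
have W_le := sum_le_norm1 (Y :|: [set s]).
rewrite setUC big_setU1 //= in W_le *.
set W := \sum_(i in Y) w i in W_le *.
have W0 : 0 <= W by apply: sumr_ge0.
have ws0 := w0 s.
have W_le_Ws : W <= w s + W by rewrite lerDr.
apply: le_trans (powR_sub_le_tangent W0 W_le_Ws p1) _.
rewrite addrK; apply: ler_pM; rewrite ?mulr_ge0 ?powR_ge0 //; first lra.
- apply: ler_wpM2l; first lra.
  by apply: ge0_ler_powR; rewrite ?nnegrE ?norm1_ge0 //; lra.
- by have := ler_norminf s; rewrite ger0_norm.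
Qed.

End PowerOfSum.

Theorem mainTheorem16 (R : realType) (n : nat) (u w : 'I_n -> R) (p : R)
  (hu0 : forall i, 0 <= u i) (hu : exists i, u i != 0)
  (hw0 : forall i, 0 <= w i) (hw : exists i, w i != 0)
  (hp : 1 < p) :
  Dmax (fpow u w p) <= p * powR (norm1 w) (p - 1) * norminf w.
Proof.
have p0 : 0 <= p by apply: ltW (lt_trans ltr01 hp).
apply: Dmax_le => [|A B s]; first exact: powR_norm_bound_ge0.
rewrite /fpow second_diffD -[leRHS]add0r.
apply: lerD; first exact: (second_diff_sum_le0 u A B s hu0).
apply: le_trans (second_diff_le_increment A B s (powR_sum_homo hw0 p p0)) _.
exact: (powR_sum_increment_le hw0 p (A :|: B) s hp).
Qed.
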